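(* The functions $F_\iota(r,s,i,j)=j\,L^\iota(r)\,i$, $\iota=1,\dots,n$, form a regular sequence in the coordinate ring $\mathbb{C}[T^*(\mathfrak{b}\times\mathbb{C}^n)^{rss}]$.
   Context: $\mathfrak{b}$ is the space of upper triangular complex $n\times n$ matrices, $\mathfrak{b}^*=\mathfrak{gl}_n/\mathfrak{n}^+$ ($\mathfrak{n}^+$ strictly upper triangular), and $T^*(\mathfrak{b}\times\mathbb{C}^n)^{rss}=\mathfrak{b}^{rss}\times\mathfrak{b}^*\times\mathbb{C}^n\times(\mathbb{C}^n)^*$, where $\mathfrak{b}^{rss}$ is the open set of $r\in\mathfrak{b}$ with pairwise distinct diagonal entries; $i$ is a column vector and $j$ a row vector. $L^\iota(r)=\big[\operatorname{tr}\prod_{k\ne\iota}(r-r_{kk}I)\big]^{-1}\prod_{k\ne\iota}(r-r_{kk}I)$ (the scalar equals $\prod_{k\ne\iota}(r_{\iota\iota}-r_{kk})\neq0$). *)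

From HB Require Import structures.
From mathcomp Require Import all_boot all_order all_algebra complex.
From mathcomp Require Import reals.
Set Implicit Arguments. Unset Strict Implicit. Unset Printing Implicit Defensive.
Import Order.TTheory GRing.Theory Num.Theory.
Local Open Scope ring_scope.

Section Defs.
Variable R : realType.
Local Notation C := (R[i]).
Variable n : nat.

(* Points of T^*(b x C^n)^{rss} = b^{rss} x b^* x C^n x (C^n)^*.
   r : upper triangular with pairwise distinct diagonal entries;
   s : element of b^* = gl_n / n^+, represented by its canonical
       lower-triangular representative (coordinates s_ab, a >= b);
   i : column vector; j : row vector. *)
Definition rss_point (r s : 'M[C]_n) : bool :=
  [&& is_trig_mx r^T, is_trig_mx s &
      [forall a : 'I_n, forall b : 'I_n, (a != b) ==> (r a a != r b b)]].

Record pt := Pt {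
  pr : 'M[C]_n; ps : 'M[C]_n; pi : 'cV[C]_n; pj : 'rV[C]_n;
  p_rss : rss_point pr ps }.

(* Polynomial functions on the affine space b x b^* x C^n x (C^n)^*,
   restricted to the (Zariski dense) open set of points above:
   generated by constants and the coordinate functions. *)
Inductive poly_fun : (pt -> C) -> Prop :=
| pf_const (c : C) : poly_fun (fun _ => c)
| pf_r (a b : 'I_n) : (a <= b)%N -> poly_fun (fun x => pr x a b)
| pf_s (a b : 'I_n) : (b <= a)%N -> poly_fun (fun x => ps x a b)
| pf_i (a : 'I_n) : poly_fun (fun x => pi x a 0)
| pf_j (a : 'I_n) : poly_fun (fun x => pj x 0 a)
| pf_add f g : poly_fun f -> poly_fun g -> poly_fun (fun x => f x + g x)
| pf_mul f g : poly_fun f -> poly_fun g -> poly_fun (fun x => f x * g x).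

Definition Delta (x : pt) : C :=
  \prod_(a < n) \prod_(b < n | a != b) (pr x a a - pr x b b).

(* The coordinate ring C[T^*(b x C^n)^{rss}] = C[...][1/Delta],
   realised as the ring of functions p / Delta^k on the points. *)
Definition regular (f : pt -> C) : Prop :=
  exists p k, poly_fun p /\ forall x, f x = p x / Delta x ^+ k.

Definition prodL (r : 'M[C]_n) (iota : 'I_n) : 'M[C]_n :=
  foldr (fun k A => (r - (r k k)%:M) *m A) 1%:M
        [seq k <- enum 'I_n | k != iota].

Definition Lmat (r : 'M[C]_n) (iota : 'I_n) : 'M[C]_n :=
  (\tr (prodL r iota))^-1 *: prodL r iota.

Definition Ffun (iota : 'I_n) (x : pt) : C :=
  (pj x *m Lmat (pr x) iota *m pi x) 0 0.

(* f lies in the ideal of the coordinate ring generated by F_iota, iota < m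
   (0-based indices). *)
Definition in_ideal (m : nat) (f : pt -> C) : Prop :=
  exists a : 'I_n -> pt -> C, (forall l, regular (a l)) /\
    forall x, f x = \sum_(l < n | (l < m)%N) a l x * Ffun l x.

Definition regular_sequence_F : Prop :=
  (forall iota : 'I_n, forall g : pt -> C, regular g ->
      in_ideal iota (fun x => g x * Ffun iota x) -> in_ideal iota g)
  /\ ~ in_ideal n (fun _ => 1).

End Defs.

From mathcomp Require Import all_boot all_order all_algebra complex.
From mathcomp Require Import reals.
From mathcomp Require Import ring zify.
From Stdlib Require Import FunctionalExtensionality.
Set Implicit Arguments. Unset Strict Implicit. Unset Printing Implicit Defensive.
Import Order.TTheory GRing.Theory Num.Theory.
Local Open Scope ring_scope.

(* For r upper triangular with distinct diagonal entries, L^iota(r) is the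
   spectral projector of r onto its r_{iota iota}-eigenline: the L^iota are
   orthogonal idempotents, and L^iota = u v with v u = 1, where u and v are the
   iota-th column and row of L^iota. Hence F_iota = X Y with X = j u, Y = v i,
   and the substitutions i := i + (t - Y) u, j := j + (e - X) v set Y = t and
   X = e while fixing every F_kappa, kappa <> iota (as L^kappa u = 0 = v L^kappa).
   So if g F_iota lies in (F_1, ..., F_{iota-1}), so does g composed with both
   substitutions whenever e t <> 0. A regular function is a polynomial of
   bounded degree in t along each substitution, so Lagrange interpolation at
   t = 1, 2, ... recovers its value at t = Y, where the substitution is the
   identity. The quotient by all the F_iota is non-zero: they vanish at
   i = j = 0. *)

Section SpectralProjector.
Variables (F : fieldType) (m : nat).
Local Notation n := m.+1.
Variable r : 'M[F]_n.
Hypothesis r_upper : is_trig_mx r^T.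
Hypothesis r_diag_inj : forall a b : 'I_n, a != b -> r a a != r b b.

Let r_lower0 (a b : 'I_n) : (b < a)%N -> r a b = 0.
Proof. by move=> ba; have /is_trig_mxP/(_ b a ba) := r_upper; rewrite mxE. Qed.

Lemma horner_mx_upper p :
  is_trig_mx (horner_mx r p)^T /\ forall a, horner_mx r p a a = p.[r a a].
Proof.
elim/poly_ind: p => [|p c [/is_trig_mxP IHtrig IHdiag]].
  by rewrite rmorph0; split=> [|a]; rewrite ?trmx0 ?mx0_is_trig ?mxE ?horner0.
have pr_lower0 (a b : 'I_n) : (b < a)%N -> horner_mx r p a b = 0.
  by move=> ba; have := IHtrig b a ba; rewrite mxE.
rewrite rmorphD rmorphM /= horner_mx_X horner_mx_C; split.
  apply/is_trig_mxP => b a ba; rewrite !mxE -val_eqE /= (gtn_eqF ba) mulr0n addr0.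
  rewrite big1 // => d _; have [da|ad] := ltnP d a; first by rewrite pr_lower0 ?mul0r.
  by rewrite r_lower0 ?mulr0 //; apply: leq_trans ba ad.
move=> a; rewrite hornerMXaddC !mxE eqxx mulr1n (bigD1 a) //= big1 ?addr0 ?IHdiag //.
move=> d da.
have [lt_da|le_ad] := ltnP d a; first by rewrite pr_lower0 ?mul0r.
by rewrite r_lower0 ?mulr0 // ltn_neqAle le_ad andbT (inj_eq val_inj) eq_sym.
Qed.

Lemma char_poly_upper : char_poly r = \prod_(k < n) ('X - (r k k)%:P).
Proof.
have -> : char_poly r = char_poly r^T.
  by rewrite /char_poly -det_tr; congr (\det _); apply/matrixP => a b; rewrite !mxE eq_sym.
by rewrite char_poly_trig //; apply: eq_bigr => k _; rewrite mxE.
Qed.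

Definition spectral_poly (l : 'I_n) : {poly F} :=
  \prod_(k < n | k != l) ('X - (r k k)%:P).

Lemma spectral_polyE l x : (spectral_poly l).[x] = \prod_(k < n | k != l) (x - r k k).
Proof. by rewrite horner_prod; apply: eq_bigr => k _; rewrite hornerXsubC. Qed.

Lemma spectral_poly_eig_neq0 l : (spectral_poly l).[r l l] != 0.
Proof.
by rewrite spectral_polyE; apply/prodf_neq0 => k kl; rewrite subr_eq0 r_diag_inj 1?eq_sym.
Qed.

Definition spectral_proj (l : 'I_n) : 'M[F]_n :=
  (spectral_poly l).[r l l]^-1 *: horner_mx r (spectral_poly l).

Lemma mulmx_spectral_proj l : r *m spectral_proj l = r l l *: spectral_proj l.
Proof.
have := Cayley_Hamilton r; rewrite char_poly_upper (bigD1 l) //= rmorphM /=.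
rewrite rmorphB /= horner_mx_X horner_mx_C mulrBl => /eqP; rewrite subr_eq0 => /eqP CH.
rewrite -[\prod_(_ < _ | _) _]/(spectral_poly l) in CH.
by rewrite /spectral_proj -scalemxAr mulmxE CH -mulmxE mul_scalar_mx scalerA mulrC -scalerA.
Qed.

Lemma horner_mx_spectral_proj p l :
  horner_mx r p *m spectral_proj l = p.[r l l] *: spectral_proj l.
Proof.
elim/poly_ind: p => [|p c IH]; first by rewrite rmorph0 mul0mx horner0 scale0r.
rewrite rmorphD rmorphM /= horner_mx_X horner_mx_C mulmxDl -mulmxE -mulmxA.
rewrite mulmx_spectral_proj -scalemxAr IH scalerA mul_scalar_mx hornerMXaddC.
by rewrite scalerDl mulrC.
Qed.

Lemma spectral_projM k l :
  spectral_proj k *m spectral_proj l = (k == l)%:R *: spectral_proj l.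
Proof.
rewrite {1}/spectral_proj -scalemxAl horner_mx_spectral_proj scalerA.
have [->|kl] := eqVneq k l; first by rewrite mulVf ?spectral_poly_eig_neq0.
rewrite [(spectral_poly k).[r l l]]spectral_polyE (bigD1 l) 1?eq_sym //=.
by rewrite subrr mul0r mulr0 scale0r.
Qed.

Lemma spectral_proj_diag l : spectral_proj l l l = 1.
Proof.
have [_ diagE] := horner_mx_upper (spectral_poly l).
by rewrite mxE diagE mulVf ?spectral_poly_eig_neq0.
Qed.

Lemma row_col_spectral_proj l : row l (col l (spectral_proj l)) = 1.
Proof.
by apply/matrixP => i j; rewrite !ord1 !mxE -(spectral_proj_diag l) mxE.
Qed.

Lemma mxtrace_horner_spectral_poly l :
  \tr (horner_mx r (spectral_poly l)) = (spectral_poly l).[r l l].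
Proof.
have [_ diagE] := horner_mx_upper (spectral_poly l).
rewrite /mxtrace (bigD1 l) //= big1 ?addr0 ?diagE // => a al.
by rewrite diagE spectral_polyE (bigD1 a) //= subrr mul0r.
Qed.

(* Back substitution: row a of the equation only involves rows c >= a of v,
   and its diagonal coefficient r a a - r l l is non-zero unless a = l. *)
Lemma eigenspace_row_eq0 p (v : 'M[F]_(n, p)) l :
  (r - (r l l)%:M) *m v = 0 -> row l v = 0 -> v = 0.
Proof.
move=> Nv0 vl0; apply/matrixP => a b; rewrite mxE; move: a.
have vl : v l b = 0 by have /matrixP/(_ 0 b) := vl0; rewrite !mxE.
suff vb0 k (a : 'I_n) : (n <= a + k)%N -> v a b = 0.
  by move=> a; apply: (vb0 n); rewrite leq_addl.
elim: k a => [a|k IH a le_n_ak]; first by rewrite addn0 leqNgt ltn_ord.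
have [|lt_ak_n] := leqP n (a + k); first exact: IH.
have /matrixP/(_ a b) := Nv0; rewrite !mxE (bigD1 a) //= big1 => [|c ca].
  rewrite !mxE eqxx mulr1n addr0 => /eqP; rewrite mulf_eq0 subr_eq0.
  by have [->|/r_diag_inj/negbTE->] := eqVneq a l; [rewrite vl|move/eqP].
have [lt_ca|le_ac] := ltnP c a.
  by rewrite !mxE (r_lower0 lt_ca) [a == c]eq_sym (negbTE ca) subrr mul0r.
have lt_ac : (a < c)%N by rewrite ltn_neqAle le_ac andbT (inj_eq val_inj) eq_sym.
by rewrite IH ?mulr0 //; lia.
Qed.

Lemma spectral_proj_rank1 l :
  spectral_proj l = col l (spectral_proj l) *m row l (spectral_proj l).
Proof.
set P := spectral_proj l.
have NP0 : (r - (r l l)%:M) *m P = 0.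
  by rewrite mulmxBl mulmx_spectral_proj mul_scalar_mx subrr.
apply/eqP; rewrite -subr_eq0; apply/eqP; apply: (eigenspace_row_eq0 (l := l)).
  by rewrite mulmxBr colE !mulmxA NP0 !mul0mx subrr.
by rewrite linearB /= row_mul row_col_spectral_proj mul1mx subrr.
Qed.

Lemma row_mul_col_spectral_proj l :
  row l (spectral_proj l) *m col l (spectral_proj l) = 1.
Proof.
rewrite rowE colE -!mulmxA (mulmxA (spectral_proj l)) spectral_projM eqxx scale1r.
by rewrite -colE -rowE row_col_spectral_proj.
Qed.

Lemma spectral_proj_mul_col k l : k != l ->
  spectral_proj k *m col l (spectral_proj l) = 0.
Proof. by move=> kl; rewrite colE mulmxA spectral_projM (negbTE kl) scale0r mul0mx. Qed.

Lemma row_mul_spectral_proj k l : k != l ->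
  row l (spectral_proj l) *m spectral_proj k = 0.
Proof.
by move=> kl; rewrite rowE -mulmxA spectral_projM eq_sym (negbTE kl) scale0r mulmx0.
Qed.
End SpectralProjector.

Section Lmat.
Variables (R : realType) (m : nat).
Variable r : 'M[R[i]]_m.+1.

Lemma prodL_horner l : prodL r l = horner_mx r (spectral_poly r l).
Proof.
have -> : spectral_poly r l =
    \prod_(k <- [seq k <- enum 'I_m.+1 | k != l]) ('X - (r k k)%:P).
  by rewrite big_filter enumT.
rewrite /prodL; elim: (filter _ _) => [|k s IH] /=; first by rewrite big_nil -polyC1 horner_mx_C.
by rewrite big_cons rmorphM /= -IH rmorphB /= horner_mx_X horner_mx_C mulmxE.
Qed.

Lemma Lmat_spectral_proj l : is_trig_mx r^T -> Lmat r l = spectral_proj r l.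
Proof. by move=> r_upper; rewrite /Lmat prodL_horner mxtrace_horner_spectral_poly. Qed.
End Lmat.

Section RegularFunctions.
Variables (R : realType) (n : nat).
Local Notation C := R[i].
Local Notation pt := (pt R n).
Implicit Types (f g : pt -> C) (x : pt).

Lemma pr_upper x : is_trig_mx (pr x)^T.
Proof. by case: x => r s i j /= /and3P[]. Qed.

Lemma pr_diag_inj x a b : a != b -> pr x a a != pr x b b.
Proof.
by case: x => r s i j /= /and3P[_ _ /forallP/(_ a)/forallP/(_ b)/implyP]; apply.
Qed.

Lemma poly_fun_eq f g : (forall x, f x = g x) -> poly_fun g -> poly_fun f.
Proof. by move=> fg; rewrite (functional_extensionality _ _ fg). Qed.

Lemma poly_fun_opp f : poly_fun f -> poly_fun (fun x => - f x).
Proof.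
move=> pf; apply: (poly_fun_eq (fun x => esym (mulN1r (f x)))).
by apply: pf_mul => //; apply: pf_const.
Qed.

Lemma poly_fun_prod (I : Type) (s : seq I) (P : pred I) (F : I -> pt -> C) :
  (forall i, poly_fun (F i)) -> poly_fun (fun x => \prod_(i <- s | P i) F i x).
Proof.
move=> pfF; elim: s => [|a s IH].
  by apply: (poly_fun_eq (fun x => big_nil _ _ _ _)); apply: pf_const.
apply: (@poly_fun_eq _ (fun x => if P a then F a x * \prod_(i <- s | P i) F i x
                                 else \prod_(i <- s | P i) F i x)).
  by move=> x; rewrite big_cons.
by case: (P a) => //; apply: pf_mul.
Qed.

Lemma poly_fun_exp f k : poly_fun f -> poly_fun (fun x => f x ^+ k).
Proof.
move=> pf; elim: k => [|k IH].
  by apply: (poly_fun_eq (fun x => expr0 (f x))); apply: pf_const.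
by apply: (poly_fun_eq (fun x => exprS (f x) k)); apply: pf_mul.
Qed.

Lemma poly_fun_pr a b : poly_fun (fun x => pr x a b).
Proof.
have [le_ab|lt_ba] := leqP a b; first exact: pf_r.
apply: (@poly_fun_eq _ (fun=> 0)); last exact: pf_const.
by move=> x; have /is_trig_mxP/(_ b a lt_ba) := pr_upper x; rewrite mxE.
Qed.

Lemma poly_fun_Delta : poly_fun (@Delta R n).
Proof.
apply: poly_fun_prod => a; apply: poly_fun_prod => b.
by apply: pf_add; [|apply: poly_fun_opp]; apply: poly_fun_pr.
Qed.

Lemma Delta_neq0 x : Delta x != 0.
Proof.
by apply/prodf_neq0 => a _; apply/prodf_neq0 => b ab; rewrite subr_eq0 pr_diag_inj.
Qed.

Lemma regular_eq f g : (forall x, f x = g x) -> regular g -> regular f.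
Proof. by move=> fg [p [k [pf_p gE]]]; exists p, k; split => // x; rewrite fg. Qed.

Lemma poly_fun_regular f : poly_fun f -> regular f.
Proof. by move=> pf; exists f, 0%N; split => // x; rewrite expr0 divr1. Qed.

Lemma regular_const c : regular (fun _ : pt => c).
Proof. exact/poly_fun_regular/pf_const. Qed.

Lemma regular_div_Delta f k : regular f -> regular (fun x => f x / Delta x ^+ k).
Proof.
move=> [p [l [pf_p fE]]]; exists p, (l + k)%N; split => // x.
by rewrite fE exprD invfM mulrA.
Qed.

Lemma regular_inv_factor_Delta p q : poly_fun p -> poly_fun q ->
  (forall x, p x * q x = Delta x) -> regular (fun x => (p x)^-1).
Proof.
move=> pf_p pf_q pqE; exists q, 1%N; split => // x.
have := Delta_neq0 x; rewrite expr1 -pqE mulf_eq0 negb_or => /andP[p0 q0].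
by rewrite invfM mulrCA divff ?mulr1.
Qed.

Lemma regular_add f g : regular f -> regular g -> regular (fun x => f x + g x).
Proof.
move=> [p [k [pf_p fE]]] [q [l [pf_q gE]]].
exists (fun x => p x * Delta x ^+ l + q x * Delta x ^+ k), (k + l)%N; split.
  by apply: pf_add; apply: pf_mul => //; apply/poly_fun_exp/poly_fun_Delta.
move=> x; rewrite fE gE exprD; have D0 := Delta_neq0 x.
by field; rewrite !expf_neq0.
Qed.

Lemma regular_mul f g : regular f -> regular g -> regular (fun x => f x * g x).
Proof.
move=> [p [k [pf_p fE]]] [q [l [pf_q gE]]].
exists (fun x => p x * q x), (k + l)%N; split; first exact: pf_mul.
by move=> x; rewrite fE gE exprD invfM; ring.
Qed.

Lemma regular_opp f : regular f -> regular (fun x => - f x).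
Proof.
move=> rf; apply: (regular_eq (fun x => esym (mulN1r (f x)))).
by apply: regular_mul => //; apply: regular_const.
Qed.

Lemma regular_sum (I : Type) (s : seq I) (P : pred I) (F : I -> pt -> C) :
  (forall i, regular (F i)) -> regular (fun x => \sum_(i <- s | P i) F i x).
Proof.
move=> rF; elim: s => [|a s IH].
  by apply: (regular_eq (fun x => big_nil _ _ _ _)); apply: regular_const.
apply: (@regular_eq _ (fun x => if P a then F a x + \sum_(i <- s | P i) F i x
                               else \sum_(i <- s | P i) F i x)).
  by move=> x; rewrite big_cons.
by case: (P a) => //; apply: regular_add.
Qed.

Lemma regular_horner (p : {poly C}) f : regular f -> regular (fun x => p.[f x]).
Proof.
move=> rf; elim/poly_ind: p => [|p c IH].
  by apply: (regular_eq (fun x => horner0 (f x))); apply: regular_const.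
apply: (regular_eq (fun x => hornerMXaddC p c (f x))).
by apply: regular_add; [apply: regular_mul|apply: regular_const].
Qed.

Definition regular_mx p q (M : pt -> 'M[C]_(p, q)) :=
  forall a b, regular (fun x => M x a b).

Lemma regular_mx_pr : regular_mx (fun x : pt => pr x).
Proof. by move=> a b; apply/poly_fun_regular/poly_fun_pr. Qed.

Lemma regular_mx_pi : regular_mx (fun x : pt => pi x).
Proof. by move=> a b; rewrite (ord1 b); apply/poly_fun_regular/pf_i. Qed.

Lemma regular_mx_pj : regular_mx (fun x : pt => pj x).
Proof. by move=> a b; rewrite (ord1 a); apply/poly_fun_regular/pf_j. Qed.

Lemma regular_mx_const p q (A : 'M[C]_(p, q)) : regular_mx (fun=> A).
Proof. by move=> a b; apply: regular_const. Qed.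

Lemma regular_mx_add p q (A B : pt -> 'M[C]_(p, q)) :
  regular_mx A -> regular_mx B -> regular_mx (fun x => A x + B x).
Proof.
move=> rA rB a b; apply: (@regular_eq _ (fun x => A x a b + B x a b)).
  by move=> x; rewrite mxE.
exact: regular_add.
Qed.

Lemma regular_mx_opp p q (A : pt -> 'M[C]_(p, q)) :
  regular_mx A -> regular_mx (fun x => - A x).
Proof.
move=> rA a b; apply: (@regular_eq _ (fun x => - A x a b)).
  by move=> x; rewrite mxE.
exact: regular_opp.
Qed.

Lemma regular_mx_scale p q (c : pt -> C) (A : pt -> 'M[C]_(p, q)) :
  regular c -> regular_mx A -> regular_mx (fun x => c x *: A x).
Proof.
move=> rc rA a b; apply: (@regular_eq _ (fun x => c x * A x a b)).
  by move=> x; rewrite mxE.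
exact: regular_mul.
Qed.

Lemma regular_mx_scalar p (c : pt -> C) :
  regular c -> regular_mx (fun x => (c x)%:M : 'M[C]_p).
Proof.
move=> rc a b; apply: (@regular_eq _ (fun x => c x * (a == b)%:R)).
  by move=> x; rewrite mxE mulr_natr.
by apply: regular_mul => //; apply: regular_const.
Qed.

Lemma regular_mx_mul p q s (A : pt -> 'M[C]_(p, q)) (B : pt -> 'M[C]_(q, s)) :
  regular_mx A -> regular_mx B -> regular_mx (fun x => A x *m B x).
Proof.
move=> rA rB a b; apply: (@regular_eq _ (fun x => \sum_c A x a c * B x c b)).
  by move=> x; rewrite mxE.
by apply: regular_sum => c; apply: regular_mul.
Qed.

Lemma regular_mx_row p q (A : pt -> 'M[C]_(p, q)) l :
  regular_mx A -> regular_mx (fun x => row l (A x)).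
Proof. by move=> rA a b; apply: (regular_eq _ (rA l b)) => x; rewrite mxE. Qed.

Lemma regular_mx_col p q (A : pt -> 'M[C]_(p, q)) l :
  regular_mx A -> regular_mx (fun x => col l (A x)).
Proof. by move=> rA a b; apply: (regular_eq _ (rA a l)) => x; rewrite mxE. Qed.
End RegularFunctions.

Arguments regular_const {R n}.
Arguments regular_mx_const {R n p q}.
Arguments regular_mx_pr {R n}.
Arguments regular_mx_pi {R n}.
Arguments regular_mx_pj {R n}.

Section Substitution.
Variables (R : realType) (n : nat).
Local Notation C := R[i].
Local Notation pt := (pt R n).
Implicit Types (f g : pt -> C) (x : pt).

Lemma regular_comp (Phi : pt -> pt) :
  (forall x, pr (Phi x) = pr x) -> (forall x, ps (Phi x) = ps x) ->
  regular_mx (fun x => pi (Phi x)) -> regular_mx (fun x => pj (Phi x)) ->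
  forall f, regular f -> regular (fun x => f (Phi x)).
Proof.
move=> prE psE r_pi r_pj f [p [k [pf_p fE]]].
have rpPhi : regular (fun x => p (Phi x)).
  elim: pf_p {fE} => [c|a b _|a b le_ba|a|a|f1 f2 _ r1 _ r2|f1 f2 _ r1 _ r2] /=.
  - exact: regular_const.
  - by apply: (regular_eq _ (regular_mx_pr a b)) => x; rewrite prE.
  - by apply: (regular_eq _ (poly_fun_regular (pf_s _ le_ba))) => x; rewrite psE.
  - exact: r_pi.
  - exact: r_pj.
  - exact: regular_add.
  - exact: regular_mul.
apply: (regular_eq _ (regular_div_Delta k rpPhi)) => x.
by rewrite fE /Delta prE.
Qed.

Definition poly_along (Phi : C -> pt -> pt) f :=
  exists d, forall x, exists2 q : {poly C}, (size q <= d)%N &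
    forall t, f (Phi t x) = q.[t].

Lemma poly_along_affine Phi f (a b : pt -> C) :
  (forall t x, f (Phi t x) = a x + t * b x) -> poly_along Phi f.
Proof.
move=> fE; exists 2%N => x; exists ((b x)%:P * 'X + (a x)%:P).
  by rewrite size_MXaddC; case: ifP => //; rewrite ltnS size_polyC_leq1.
by move=> t; rewrite fE hornerMXaddC hornerC addrC mulrC.
Qed.

Lemma poly_along_const Phi f : (forall t x, f (Phi t x) = f x) -> poly_along Phi f.
Proof. by move=> fE; apply: (@poly_along_affine _ _ f (fun=> 0)) => t x; rewrite mulr0 addr0. Qed.

Lemma poly_along_add Phi f g :
  poly_along Phi f -> poly_along Phi g -> poly_along Phi (fun x => f x + g x).
Proof.
move=> [d1 fE] [d2 gE]; exists (maxn d1 d2) => x.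
have [q1 size_q1 q1E] := fE x; have [q2 size_q2 q2E] := gE x.
exists (q1 + q2); last by move=> t; rewrite hornerD q1E q2E.
by rewrite (leq_trans (size_polyD _ _)) // geq_max !leq_max size_q1 size_q2 orbT.
Qed.

Lemma poly_along_mul Phi f g :
  poly_along Phi f -> poly_along Phi g -> poly_along Phi (fun x => f x * g x).
Proof.
move=> [d1 fE] [d2 gE]; exists (d1 + d2)%N => x.
have [q1 size_q1 q1E] := fE x; have [q2 size_q2 q2E] := gE x.
exists (q1 * q2); last by move=> t; rewrite hornerM q1E q2E.
by rewrite (leq_trans (size_polyMleq _ _)) //; lia.
Qed.

Lemma poly_along_regular (Phi : C -> pt -> pt) (i0 i1 : pt -> 'cV[C]_n)
    (j0 j1 : pt -> 'rV[C]_n) :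
  (forall t x, pr (Phi t x) = pr x) -> (forall t x, ps (Phi t x) = ps x) ->
  (forall t x, pi (Phi t x) = i0 x + t *: i1 x) ->
  (forall t x, pj (Phi t x) = j0 x + t *: j1 x) ->
  forall f, regular f -> poly_along Phi f.
Proof.
move=> prE psE piE pjE f [p [k [pf_p fE]]].
have [d pE] : poly_along Phi p.
  elim: pf_p {fE} => [c|a b _|a b _|a|a|f1 f2 _ r1 _ r2|f1 f2 _ r1 _ r2] /=.
  - exact: poly_along_const.
  - by apply: poly_along_const => t x; rewrite prE.
  - by apply: poly_along_const => t x; rewrite psE.
  - apply: (@poly_along_affine _ _ (fun x => i0 x a 0) (fun x => i1 x a 0)) => t x.
    by rewrite piE !mxE.
  - apply: (@poly_along_affine _ _ (fun x => j0 x 0 a) (fun x => j1 x 0 a)) => t x.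
    by rewrite pjE !mxE.
  - exact: poly_along_add.
  - exact: poly_along_mul.
exists d => x; have [q size_q qE] := pE x.
exists ((Delta x ^+ k)^-1 *: q); first exact: leq_trans (size_scale_leq _ _) size_q.
by move=> t; rewrite fE qE hornerZ mulrC /Delta prE.
Qed.
End Substitution.

Section Ideal.
Variables (R : realType) (n : nat).
Local Notation C := R[i].
Local Notation pt := (pt R n).
Implicit Types (f g : pt -> C) (x : pt).

Lemma in_ideal_eq k f g : (forall x, f x = g x) -> in_ideal k g -> in_ideal k f.
Proof. by move=> fg [a [ra gE]]; exists a; split => // x; rewrite fg. Qed.

Lemma in_ideal0 k : in_ideal k (fun _ : pt => 0).
Proof.
exists (fun _ _ => 0); split => [l|x]; first exact: regular_const.
by rewrite big1 // => l _; rewrite mul0r.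
Qed.

Lemma in_ideal_add k f g :
  in_ideal k f -> in_ideal k g -> in_ideal k (fun x => f x + g x).
Proof.
move=> [a [ra fE]] [b [rb gE]]; exists (fun l x => a l x + b l x); split.
  by move=> l; apply: regular_add.
by move=> x; rewrite fE gE -big_split; apply: eq_bigr => l _; rewrite mulrDl.
Qed.

Lemma in_ideal_mulr k c f : regular c -> in_ideal k f -> in_ideal k (fun x => f x * c x).
Proof.
move=> rc [a [ra fE]]; exists (fun l x => c x * a l x); split.
  by move=> l; apply: regular_mul.
move=> x; rewrite fE mulr_suml; apply: eq_bigr => l _.
by rewrite mulrAC [a l x * _]mulrC.
Qed.

Lemma in_ideal_sum k d (F : 'I_d -> pt -> C) :
  (forall j, in_ideal k (F j)) -> in_ideal k (fun x => \sum_(j < d) F j x).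
Proof.
elim: d F => [|d IH] F F_ideal.
  by apply: (in_ideal_eq (g := fun=> 0)) => [x|]; [rewrite big_ord0|apply: in_ideal0].
apply: (in_ideal_eq
  (g := fun x => \sum_(j < d) F (widen_ord (leqnSn d) j) x + F ord_max x)).
  by move=> x; rewrite big_ord_recr.
by apply: in_ideal_add => //; apply: IH => j.
Qed.

Lemma in_ideal_interp k (Phi : C -> pt -> pt) (tau : pt -> C) f :
  poly_along Phi f -> regular tau -> (forall x, Phi (tau x) x = x) ->
  (forall t, t != 0 -> in_ideal k (fun x => f (Phi t x))) -> in_ideal k f.
Proof.
move=> [d fPhiE] r_tau tauK fPhi_ideal.
pose node (j : nat) : C := j.+1%:R.
have node_inj : injective node by move=> a b /eqP; rewrite eqr_nat eqSS => /eqP.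
pose ell (j : 'I_d.+1) : {poly C} := tnth ((d.+1).-lagrange node) j.
apply: (@in_ideal_eq _ _ (fun x => \sum_(j < d.+1) f (Phi (node j) x) * (ell j).[tau x])).
  move=> x; have [q size_q qE] := fPhiE x.
  rewrite -{1}(tauK x) qE (lagrange_gen _ node_inj (leq_trans size_q (leqnSn d))) //.
  by rewrite horner_sum; apply: eq_bigr => j _; rewrite hornerM hornerC qE.
apply: in_ideal_sum => j; apply: in_ideal_mulr; first exact: regular_horner.
by apply: fPhi_ideal; rewrite pnatr_eq0.
Qed.

Lemma one_notin_ideal : ~ in_ideal n (fun _ : pt => 1).
Proof.
pose r0 : 'M[C]_n := diag_mx (\row_(a < n) a%:R).
have r0_rss : rss_point r0 0.
  apply/and3P; split; [by rewrite tr_diag_mx diag_mx_is_trig|exact: mx0_is_trig|].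
  apply/forallP => a; apply/forallP => b; apply/implyP => ab.
  by rewrite !mxE !eqxx !mulr1n eqr_nat.
move=> [a [_ /(_ (Pt 0 0 r0_rss))]]; rewrite big1 => [/eqP|l _]; first by rewrite oner_eq0.
by rewrite /Ffun /= mulmx0 mxE mulr0.
Qed.
End Ideal.

Section Eigencoordinates.
Variables (R : realType) (m : nat).
Local Notation n := m.+1.
Local Notation C := R[i].
Local Notation pt := (pt R n).
Implicit Types (f g : pt -> C) (x : pt).

Lemma LmatE x l : Lmat (pr x) l = spectral_proj (pr x) l.
Proof. exact/Lmat_spectral_proj/pr_upper. Qed.

Lemma regular_mx_prodL l : regular_mx (fun x => prodL (pr x) l).
Proof.
rewrite /prodL; elim: (filter _ _) => [|k s IH] /=; first exact: regular_mx_const.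
apply: regular_mx_mul => //; apply: regular_mx_add; first exact: regular_mx_pr.
by apply/regular_mx_opp/regular_mx_scalar; apply: regular_mx_pr.
Qed.

Lemma regular_inv_tr_prodL l : regular (fun x => (\tr (prodL (pr x) l))^-1).
Proof.
pose dr x a b := pr x a a - pr x b b.
have pf_dr a b : poly_fun (fun x => dr x a b).
  by apply: pf_add; [|apply: poly_fun_opp]; apply: poly_fun_pr.
apply: (regular_eq (g := fun x => (\prod_(b < n | l != b) dr x l b)^-1)).
  move=> x; rewrite prodL_horner (mxtrace_horner_spectral_poly (pr_upper x)).
  by rewrite spectral_polyE; congr (_^-1); apply: eq_bigl => k; rewrite eq_sym.
apply: (regular_inv_factor_Delta
  (q := fun x => \prod_(a < n | a != l) \prod_(b < n | a != b) dr x a b)).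
- by apply: poly_fun_prod => b.
- by apply: poly_fun_prod => a; apply: poly_fun_prod => b.
- by move=> x; rewrite /Delta [RHS](bigD1 l).
Qed.

Lemma regular_mx_Lmat l : regular_mx (fun x => Lmat (pr x) l).
Proof. exact: regular_mx_scale (regular_inv_tr_prodL l) (regular_mx_prodL l). Qed.

Variable iota : 'I_n.

Definition eigcol x : 'cV[C]_n := col iota (Lmat (pr x) iota).
Definition eigrow x : 'rV[C]_n := row iota (Lmat (pr x) iota).
Definition coordX x : C := (pj x *m eigcol x) 0 0.
Definition coordY x : C := (eigrow x *m pi x) 0 0.

Definition psi (t : C) x : pt :=
  @Pt R n (pr x) (ps x) (pi x + (t - coordY x) *: eigcol x) (pj x) (p_rss x).
Definition chi (t : C) x : pt :=
  @Pt R n (pr x) (ps x) (pi x) (pj x + (t - coordX x) *: eigrow x) (p_rss x).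

Lemma eigrow_mul_eigcol x : eigrow x *m eigcol x = 1.
Proof.
by rewrite /eigrow /eigcol LmatE (row_mul_col_spectral_proj (pr_upper x) (pr_diag_inj x)).
Qed.

Lemma Ffun_coord x : Ffun iota x = coordX x * coordY x.
Proof.
rewrite /Ffun LmatE (spectral_proj_rank1 (pr_upper x) (pr_diag_inj x)) -!LmatE.
by rewrite mulmxA -mulmxA mxE big_ord1.
Qed.

Lemma coordY_psi t x : coordY (psi t x) = t.
Proof.
rewrite /coordY /= mulmxDr -scalemxAr eigrow_mul_eigcol mxE -/(coordY x).
by rewrite !mxE mulr1 addrC subrK.
Qed.

Lemma coordX_chi t x : coordX (chi t x) = t.
Proof.
rewrite /coordX /= mulmxDl -scalemxAl eigrow_mul_eigcol mxE -/(coordX x).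
by rewrite !mxE mulr1 addrC subrK.
Qed.

Lemma psi_coordY x : psi (coordY x) x = x.
Proof. by rewrite /psi subrr scale0r addr0; case: x. Qed.

Lemma chi_coordX x : chi (coordX x) x = x.
Proof. by rewrite /chi subrr scale0r addr0; case: x. Qed.

Lemma Ffun_psi l t x : l != iota -> Ffun l (psi t x) = Ffun l x.
Proof.
move=> l_iota; rewrite /Ffun /= -!mulmxA mulmxDr -scalemxAr /eigcol !LmatE.
by rewrite (spectral_proj_mul_col (pr_upper x) (pr_diag_inj x) l_iota) scaler0 addr0.
Qed.

Lemma Ffun_chi l t x : l != iota -> Ffun l (chi t x) = Ffun l x.
Proof.
move=> l_iota; rewrite /Ffun /= mulmxDl -scalemxAl /eigrow !LmatE.
by rewrite (row_mul_spectral_proj (pr_upper x) (pr_diag_inj x) l_iota) scaler0 addr0.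
Qed.

Lemma Ffun_psi_chi c e x : Ffun iota (psi c (chi e x)) = e * c.
Proof. by rewrite Ffun_coord coordY_psi -[coordX _]/(coordX (chi e x)) coordX_chi. Qed.

Lemma regular_mx_eigcol : regular_mx eigcol.
Proof. exact/regular_mx_col/regular_mx_Lmat. Qed.

Lemma regular_mx_eigrow : regular_mx eigrow.
Proof. exact/regular_mx_row/regular_mx_Lmat. Qed.

Lemma regular_coordX : regular coordX.
Proof. exact: (regular_mx_mul regular_mx_pj regular_mx_eigcol 0 0). Qed.

Lemma regular_coordY : regular coordY.
Proof. exact: (regular_mx_mul regular_mx_eigrow regular_mx_pi 0 0). Qed.

Lemma regular_psi c f : regular f -> regular (fun x => f (psi c x)).
Proof.
apply: regular_comp => //; last exact: regular_mx_pj.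
apply: regular_mx_add; first exact: regular_mx_pi.
apply: regular_mx_scale; last exact: regular_mx_eigcol.
by apply: regular_add; [apply: regular_const|apply/regular_opp/regular_coordY].
Qed.

Lemma regular_chi e f : regular f -> regular (fun x => f (chi e x)).
Proof.
apply: regular_comp => //; first exact: regular_mx_pi.
apply: regular_mx_add; first exact: regular_mx_pj.
apply: regular_mx_scale; last exact: regular_mx_eigrow.
by apply: regular_add; [apply: regular_const|apply/regular_opp/regular_coordX].
Qed.

Lemma poly_along_psi f : regular f -> poly_along psi f.
Proof.
apply: (@poly_along_regular _ _ psi (fun x => pi x - coordY x *: eigcol x) eigcol
  (fun x => pj x) (fun=> 0)) => // t x; last by rewrite scaler0 addr0.
by rewrite /= scalerBl addrA addrAC.
Qed.

Lemma poly_along_chi f : regular f -> poly_along chi f.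
Proof.
apply: (@poly_along_regular _ _ chi (fun x => pi x) (fun=> 0)
  (fun x => pj x - coordX x *: eigrow x) eigrow) => // t x; first by rewrite scaler0 addr0.
by rewrite /= scalerBl addrA addrAC.
Qed.

Lemma in_ideal_psi_chi g c e :
  in_ideal iota (fun x => g x * Ffun iota x) -> c != 0 -> e != 0 ->
  in_ideal iota (fun x => g (psi c (chi e x))).
Proof.
move=> [a [ra gFE]] c0 e0.
exists (fun l x => (e * c)^-1 * a l (psi c (chi e x))); split.
  move=> l; apply: regular_mul; first exact: regular_const.
  by apply: (regular_chi e (f := fun y => a l (psi c y))); apply: regular_psi.
move=> x; have := gFE (psi c (chi e x)); rewrite Ffun_psi_chi => gE.
rewrite -[g _](mulfK (mulf_neq0 e0 c0)) gE mulr_suml; apply: eq_bigr => l lt_l_iota.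
have l_iota : l != iota by apply: contraTneq lt_l_iota => ->; rewrite ltnn.
by rewrite Ffun_psi // Ffun_chi // mulrC mulrA.
Qed.

Lemma in_ideal_cancel_Ffun g : regular g ->
  in_ideal iota (fun x => g x * Ffun iota x) -> in_ideal iota g.
Proof.
move=> rg gF_ideal.
apply: (in_ideal_interp (poly_along_psi rg) regular_coordY psi_coordY) => c c0.
apply: (in_ideal_interp (poly_along_chi (regular_psi c rg)) regular_coordX chi_coordX).
by move=> e e0; apply: in_ideal_psi_chi.
Qed.
End Eigencoordinates.

Theorem mainTheorem14 (R : realType) (n : nat) : regular_sequence_F R n.
Proof.
split; last exact: one_notin_ideal.
case: n => [|m] iota; first by case: iota.
exact: in_ideal_cancel_Ffun.
Qed.
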